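(* Let $n\ge1$. Averaged over all quasi-Stirling permutations of size $n$, the mean number of ascents is $(3n+1)/4$, the mean number of descents is $(3n+1)/4$, and the mean number of plateaus is $(n+1)/2$.
   Context: A quasi-Stirling permutation of size $n$ is a permutation $\pi_1\cdots\pi_{2n}$ of the multiset $\{1,1,2,2,\dots,n,n\}$ with no indices $i<j<k<\ell$ such that $\pi_i=\pi_k$ and $\pi_j=\pi_\ell$. For a sequence $\pi_1\cdots\pi_r$: $i\in\{1,\dots,r\}$ is a descent if $\pi_i>\pi_{i+1}$ or $i=r$; $i\in\{0,\dots,r-1\}$ is an ascent if $i=0$ or $\pi_i<\pi_{i+1}$; $i\in\{1,\dots,r-1\}$ is a plateau if $\pi_i=\pi_{i+1}$. *)

From mathcomp Require Import all_boot all_order all_algebra.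
Set Implicit Arguments. Unset Strict Implicit. Unset Printing Implicit Defensive.

(* Words are sequences of naturals, 1-indexed in the paper: pi_i = nth 0 w (i-1). *)
Definition pos (w : seq nat) (i : nat) : nat := nth 0 w i.-1.

Definition multiset_perm (n : nat) (w : seq nat) : bool :=
  (size w == 2 * n) && all (fun k => count_mem k w == 2) (iota 1 n).

Definition no_1212 (w : seq nat) : bool :=
  [forall i : 'I_(size w), forall j : 'I_(size w), forall k : 'I_(size w),
     forall l : 'I_(size w),
     ~~ [&& (i < j)%N, (j < k)%N, (k < l)%N,
            nth 0 w i == nth 0 w k & nth 0 w j == nth 0 w l]].

Definition quasi_stirling (n : nat) (w : seq nat) : bool :=
  multiset_perm n w && no_1212 w.

Definition des (w : seq nat) : nat :=
  let r := size w in
  count (fun i => (pos w i > pos w i.+1)%N || (i == r)) (iota 1 r).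

Definition asc (w : seq nat) : nat :=
  let r := size w in
  count (fun i => (i == 0) || (pos w i < pos w i.+1)%N) (iota 0 r).

Definition plat (w : seq nat) : nat :=
  let r := size w in
  count (fun i => pos w i == pos w i.+1) (iota 1 r.-1).

(* The finite set of quasi-Stirling permutations of size n, encoded as
   (2n)-tuples over 'I_n.+1 (entries 0..n; entry 0 is excluded by the
   multiset condition). *)
Definition qs_word (n : nat) (t : (2 * n).-tuple 'I_n.+1) : seq nat :=
  map (@nat_of_ord _) t.

Definition QS (n : nat) : {set (2 * n).-tuple 'I_n.+1} :=
  [set t | quasi_stirling n (qs_word t)].

Definition mean_stat (st : seq nat -> nat) (n : nat) : rat :=
  ((\sum_(t in QS n) st (qs_word t))%:R / (#|QS n|)%:R)%R.

(* A word in which every letter occurs twice avoids 1212 iff it is noncrossing,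
   i.e. of the form a u a v with u and v noncrossing on disjoint alphabets.
   Reversal preserves quasi-Stirling permutations and exchanges ascents and
   descents, so both statistics have the same mean.  The mirror map
   a u a v |-> a M(v) a M(u) is an involution of quasi-Stirling permutations with
   plat w + plat (M w) = n + 1, so plateaus have mean (n + 1)/2.  Finally each of
   the 2n - 1 adjacent pairs is an ascent, a descent or a plateau, and position 0
   is always an ascent and position 2n always a descent, so asc + des + plat = 2n + 1;
   hence the common mean of asc and des is (2n + 1 - (n + 1)/2)/2 = (3n + 1)/4. *)

From mathcomp Require Import all_boot all_order all_algebra.
From mathcomp Require Import zify.
Set Implicit Arguments. Unset Strict Implicit. Unset Printing Implicit Defensive.

Section Subsequences.
Variable T : eqType.
Implicit Types p s t w : seq T.

Lemma subseq_cat_split p s t :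
  subseq p (s ++ t) -> exists p1 p2, [/\ p = p1 ++ p2, subseq p1 s & subseq p2 t].
Proof.
case/subseqP=> m; rewrite size_cat => size_m ->.
exists (mask (take (size s) m) s), (mask (drop (size s) m) t).
by rewrite -mask_cat ?cat_take_drop ?mask_subseq // size_takel // size_m leq_addr.
Qed.

Lemma subseq_nthP (x0 : T) p w :
  reflect (exists ix, [/\ sorted ltn ix, all (gtn (size w)) ix & p = map (nth x0 w) ix])
          (subseq p w).
Proof.
apply: (iffP idP) => [/subseqP[m size_m ->] | [ix [ix_sorted ix_lt ->]]].
  exists (mask m (iota 0 (size w))); split.
  - exact: (subseq_sorted ltn_trans (mask_subseq _ _) (iota_ltn_sorted 0 _)).
  - by apply/allP=> i /mem_mask; rewrite mem_iota.
  - by rewrite map_mask -/(mkseq _ _) mkseq_nth.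
rewrite -[w in subseq _ w](mkseq_nth x0); apply: map_subseq.
apply/(subseq_uniqP (iota_uniq 0 _)).
apply: (irr_sorted_eq ltn_trans ltnn) => //.
  exact: (sorted_filter ltn_trans _ (iota_ltn_sorted 0 _)).
by move=> i; rewrite mem_filter mem_iota /= andb_idr // => /(allP ix_lt).
Qed.

Definition avoids1212 w := forall x y : T, ~~ subseq [:: x; y; x; y] w.

Lemma avoids1212_subseq s w : subseq s w -> avoids1212 w -> avoids1212 s.
Proof. by move=> sw avoid_w x y; apply: contra (avoid_w x y) => /subseq_trans; apply. Qed.

Lemma avoids1212_rev w : avoids1212 w -> avoids1212 (rev w).
Proof. by move=> avoid_w x y; rewrite -subseq_rev revK; apply: avoid_w. Qed.

Lemma rot_xyxy k (x y : T) : exists x' y', rot k [:: x; y; x; y] = [:: x'; y'; x'; y'].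
Proof.
by case: k => [|[|[|[|k]]]]; [exists x, y | exists y, x | exists x, y | exists y, x
  | exists x, y; rewrite rot_oversize].
Qed.

Lemma avoids1212_rot k w : avoids1212 w -> avoids1212 (rot k w).
Proof.
move=> avoid_w x y; apply/negP => /(subseq_rot (size w - k))[k' _].
rewrite -(size_rot k w) -/(rotr k (rot k w)) rotK.
by have [x' [y' ->]] := rot_xyxy k' x y; apply/negP.
Qed.

Lemma avoids1212_cat s t : {in s, forall x, x \notin t} ->
  avoids1212 s -> avoids1212 t -> avoids1212 (s ++ t).
Proof.
move=> st avoid_s avoid_t x y; apply/negP => /subseq_cat_split[p1 [p2 [e sub_s sub_t]]].
have [{}sub_s {}sub_t] : subseq (take (size p1) [:: x; y; x; y]) s /\
                          subseq (drop (size p1) [:: x; y; x; y]) t.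
  by rewrite e take_size_cat // drop_size_cat.
have shared z : z \in take (size p1) [:: x; y; x; y] ->
    z \in drop (size p1) [:: x; y; x; y] -> False.
  by move=> /(mem_subseq sub_s) zs /(mem_subseq sub_t); apply/negP/st.
case: (size p1) sub_s sub_t shared => [|[|[|[|k]]]] /= sub_s sub_t shared.
- by move: (avoid_t x y); rewrite sub_t.
- by apply: (shared x); rewrite !inE eqxx ?orbT.
- by apply: (shared x); rewrite !inE eqxx ?orbT.
- by apply: (shared y); rewrite !inE eqxx ?orbT.
- by move: (avoid_s x y); rewrite sub_s.
Qed.

Lemma avoids1212_small w : size w < 4 -> avoids1212 w.
Proof. by move=> small_w x y; apply: contraL small_w => /size_subseq; rewrite leqNgt. Qed.

End Subsequences.

Lemma no_1212P w : reflect (avoids1212 w) (no_1212 w).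
Proof.
apply: (iffP forallP) => [no_pat x y | avoid_w i].
  apply/negP => /(subseq_nthP 0)[[|i [|j [|k [|l [|? ?]]]]] [] //=].
  rewrite !andbT => /and3P[ij jk kl] /and4P[iw jw kw lw] [ex ey ex' ey'].
  move: (no_pat (Ordinal iw)) => /forallP/(_ (Ordinal jw))/forallP/(_ (Ordinal kw)).
  by move=> /forallP/(_ (Ordinal lw)); rewrite /= ij jk kl -ex -ey -ex' -ey' !eqxx.
apply/forallP=> j; apply/forallP=> k; apply/forallP=> l; apply/negP.
case/and5P=> ij jk kl /eqP eik /eqP ejl.
suff: subseq [:: nth 0 w i; nth 0 w j; nth 0 w i; nth 0 w j] w by apply/negP/avoid_w.
apply/(subseq_nthP 0); exists [:: val i; val j; val k; val l].
by rewrite /= ij jk kl !ltn_ord eik ejl.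
Qed.

Section AdjacentPairs.
Variable T : Type.
Implicit Types (r : rel T) (s w : seq T).

Definition count_adjacent r w := if w is x :: s then count id (pairmap r x s) else 0.

Lemma count_adjacent_cons2 r x y s :
  count_adjacent r [:: x, y & s] = r x y + count_adjacent r (y :: s).
Proof. by []. Qed.

Lemma count_adjacent_nth (x0 : T) r w :
  count_adjacent r w = count (fun i => r (nth x0 w i) (nth x0 w i.+1)) (iota 0 (size w).-1).
Proof.
case: w => //= x s; rewrite -[pairmap r x s](mkseq_nth false) size_pairmap count_map.
by apply: eq_in_count => i; rewrite mem_iota => /= i_s; rewrite (nth_pairmap x0).
Qed.

Lemma count_adjacent_rev r w : count_adjacent r (rev w) = count_adjacent (fun x y => r y x) w.
Proof.
case: w => // x s; elim: s x => // y s IH x.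
rewrite rev_cons count_adjacent_cons2 -IH; case def_ys: (rev (y :: s)) => [|z t].
  by move/(congr1 size): def_ys; rewrite size_rev.
have last_zt : last z t = y.
  by rewrite -[last z t]/(last x (z :: t)) -def_ys rev_cons last_rcons.
by rewrite /= -cats1 pairmap_cat count_cat /= last_zt addn0 addnC.
Qed.

End AdjacentPairs.

Section Noncrossing.
Variable T : eqType.
Implicit Types (a : T) (s u v w : seq T).

Inductive noncrossing : seq T -> Prop :=
| noncrossing_nil : noncrossing [::]
| noncrossing_arch a u v : a \notin u -> a \notin v -> {in u, forall x, x \notin v} ->
    noncrossing u -> noncrossing v -> noncrossing (a :: u ++ a :: v).

Lemma noncrossing_avoids1212 w : noncrossing w -> avoids1212 w.
Proof.
elim=> [|a u v a_u a_v uv _ avoid_u _ avoid_v]; first exact: avoids1212_small.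
rewrite -cat_rcons -cat_cons; apply: avoids1212_cat => //.
  by move=> x; rewrite inE mem_rcons inE orbA orbb => /predU1P[-> | /uv].
(* [a :: u ++ [:: a]] is a rotation of [u ++ [:: a; a]], whose two blocks share no letter. *)
rewrite -[a :: _]/([:: a] ++ _) -rot_size_cat cat_rcons.
apply/avoids1212_rot/avoids1212_cat/avoids1212_small => //.
by move=> x x_u; rewrite !inE orbb; apply: contra a_u => /eqP <-.
Qed.

Lemma avoids1212_noncrossing w :
  {in w, forall x, count_mem x w = 2} -> avoids1212 w -> noncrossing w.
Proof.
have [m] := ubnP (size w); elim: m w => // m IH [|a s] size_w twice avoid.
  exact: noncrossing_nil.
have a_s : a \in s.
  by apply: contraT => /count_memPn a_s0; move: (twice a (mem_head a s)); rewrite /= eqxx a_s0.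
have [u [v [def_s a_u]]] : exists u v, s = u ++ a :: v /\ a \notin u.
  exists (take (index a s) s), (drop (index a s).+1 s).
  by rewrite -drop_index // cat_take_drop; split=> //; apply/negP => /index_ltn; rewrite ltnn.
subst s; rewrite /= size_cat /= in size_w.
have count_w x : count_mem x (a :: u ++ a :: v) = (a == x).*2 + count_mem x u + count_mem x v.
  by rewrite /= count_cat /= -addnn; lia.
have a_v : a \notin v.
  by apply/count_memPn; move: (twice a (mem_head _ _)); rewrite count_w eqxx (count_memPn a_u); lia.
have uv : {in u, forall x, x \notin v}.
  move=> x x_u; apply: contra (avoid a x) => x_v.
  rewrite -[[:: a; x; a; x]]/([:: a] ++ [:: x] ++ [:: a] ++ [:: x]).
  rewrite -[a :: u ++ _]/([:: a] ++ u ++ [:: a] ++ v).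
  by do !apply: cat_subseq; rewrite // sub1seq.
have a_neq x : x \in u ++ v -> (a == x) = false.
  by move=> x_uv; apply: contraTF x_uv => /eqP <-; rewrite mem_cat negb_or a_u.
apply: noncrossing_arch => //; apply: IH.
- lia.
- move=> x x_u; move: (twice x); rewrite count_w a_neq ?mem_cat ?x_u //.
  by rewrite (count_memPn (uv x x_u)) inE mem_cat x_u orbT => /(_ isT); lia.
- apply: avoids1212_subseq avoid; apply: subseq_trans (subseq_cons _ a).
  exact: prefix_subseq.
- lia.
- move=> x x_v; have x_u : x \notin u by apply: contraL x_v; apply: uv.
  move: (twice x); rewrite count_w a_neq ?mem_cat ?x_v ?orbT // (count_memPn x_u).
  by rewrite inE mem_cat /= inE x_v !orbT => /(_ isT); lia.
- apply: avoids1212_subseq avoid; apply: subseq_trans (subseq_cons _ a).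
  by rewrite -cat_rcons suffix_subseq.
Qed.

Fixpoint mirror_rec k s : seq T :=
  match k, s with
  | k'.+1, a :: s' =>
      let i := index a s' in a :: mirror_rec k' (drop i.+1 s') ++ a :: mirror_rec k' (take i s')
  | _, _ => s
  end.

Definition mirror s := mirror_rec (size s) s.

Lemma mirror_rec_fuel k1 k2 s :
  size s <= k1 -> size s <= k2 -> mirror_rec k1 s = mirror_rec k2 s.
Proof.
elim: k1 k2 s => [|k1 IH] [|k2] [|a s] //= s_k1 s_k2.
by congr (a :: _ ++ a :: _); apply: IH; rewrite ?size_drop ?size_take_min; lia.
Qed.

Lemma mirror_arch a u v :
  a \notin u -> mirror (a :: u ++ a :: v) = a :: mirror v ++ a :: mirror u.
Proof.
move=> a_u; rewrite /mirror /= index_cat (negbTE a_u) /= eqxx addn0.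
have -> : drop (size u).+1 (u ++ a :: v) = v by rewrite -cat_rcons drop_size_cat ?size_rcons.
rewrite take_size_cat //.
by congr (a :: _ ++ a :: _); apply: mirror_rec_fuel; rewrite // size_cat /=; lia.
Qed.

Lemma perm_mirror w : noncrossing w -> perm_eq (mirror w) w.
Proof.
elim=> // a u v a_u _ _ _ perm_u _ perm_v; rewrite mirror_arch //.
apply/permP => p; rewrite /= !count_cat /= (permP perm_u) (permP perm_v); lia.
Qed.

Lemma noncrossing_mirror w : noncrossing w -> noncrossing (mirror w).
Proof.
elim=> [|a u v a_u a_v uv nc_u IHu nc_v IHv]; first exact: noncrossing_nil.
rewrite mirror_arch //; apply: noncrossing_arch => //.
- by rewrite (perm_mem (perm_mirror nc_v)).
- by rewrite (perm_mem (perm_mirror nc_u)).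
- move=> x; rewrite (perm_mem (perm_mirror nc_v)) (perm_mem (perm_mirror nc_u)).
  by apply: contraL; apply: uv.
Qed.

Lemma mirrorK w : noncrossing w -> mirror (mirror w) = w.
Proof.
elim=> // a u v a_u a_v _ _ IHu nc_v IHv.
rewrite mirror_arch // mirror_arch ?IHu ?IHv //.
by rewrite (perm_mem (perm_mirror nc_v)).
Qed.

Lemma count_adjacent_eq_arch a u v : a \notin u -> a \notin v ->
  count_adjacent eq_op (a :: u ++ a :: v) =
  count_adjacent eq_op u + count_adjacent eq_op v + (u == [::]).
Proof.
have head_neq s : a \notin s -> count id (pairmap eq_op a s) = count_adjacent eq_op s.
  by case: s => //= y s; rewrite inE negb_or => /andP[/negbTE -> _].
move=> a_u a_v; rewrite /= pairmap_cat count_cat /= !head_neq //.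
have -> : (last a u == a) = (u == [::]).
  case: u a_u => [|y u] /=; first by rewrite eqxx.
  by apply: contraNF => /eqP <-; apply: mem_last.
by rewrite addnA addnAC.
Qed.

Lemma count_adjacent_eq_mirror w : noncrossing w ->
  2 * (count_adjacent eq_op (mirror w) + count_adjacent eq_op w + (w == [::])) = size w + 2.
Proof.
elim=> // a u v a_u a_v _ nc_u IHu nc_v IHv.
have mirror_nil s : noncrossing s -> (mirror s == [::]) = (s == [::]).
  by move=> /perm_mirror/perm_size; case: (mirror s); case: s.
rewrite mirror_arch // !count_adjacent_eq_arch ?(perm_mem (perm_mirror _)) //.
by rewrite mirror_nil // /= size_cat /=; lia.
Qed.

End Noncrossing.

Lemma count_adjacent_trichotomy (w : seq nat) :
  count_adjacent ltn w + count_adjacent gtn w + count_adjacent eq_op w = (size w).-1.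
Proof.
case: w => // x s; elim: s x => // y s IH x.
rewrite !count_adjacent_cons2 -[(size _).-1]/((size (y :: s)).-1).+1 -(IH y).
by rewrite /=; case: ltngtP; lia.
Qed.

Lemma plat_count_adjacent w : plat w = count_adjacent eq_op w.
Proof. by rewrite /plat (count_adjacent_nth 0) (iotaDl 1 0) count_map. Qed.

Lemma asc_count_adjacent w : w != [::] -> asc w = (count_adjacent ltn w).+1.
Proof.
case: w => // x s _; rewrite /asc (count_adjacent_nth 0) /= (iotaDl 1 0) count_map.
by rewrite add1n.
Qed.

Lemma des_count_adjacent w : w != [::] -> des w = (count_adjacent gtn w).+1.
Proof.
case: w => // x s _; rewrite /des (count_adjacent_nth 0) [RHS]/= -[size (x :: s)]/(size s).+1.
rewrite (iotaDl 1 0) count_map -[X in iota 0 X]addn1 iotaD count_cat /= add1n eqxx orbT.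
rewrite -[in RHS]addn1; congr (_ + _).
apply: eq_in_count => i; rewrite mem_iota add0n => i_s.
by rewrite /pos /= add1n eqSS ltn_eqF ?orbF.
Qed.

Lemma des_rev w : des (rev w) = asc w.
Proof.
case: w => // x s; rewrite des_count_adjacent ?asc_count_adjacent //.
  by rewrite count_adjacent_rev.
by rewrite -size_eq0 size_rev.
Qed.

Lemma asc_des_plat w : w != [::] -> asc w + des w + plat w = (size w).+1.
Proof.
move=> w0; rewrite asc_count_adjacent // des_count_adjacent // plat_count_adjacent.
have := count_adjacent_trichotomy w; case: w w0 => // x s _ /=; lia.
Qed.

Lemma count_mem_uniq_sum (T : eqType) (s w : seq T) :
  uniq s -> count (mem s) w = \sum_(k <- s) count_mem k w.
Proof.
elim: s => [_|k s IH /andP[k_s uniq_s]]; first by rewrite big_nil; elim: w.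
rewrite big_cons -IH // {IH}; elim: w => //= y w ->; rewrite inE eq_sym.
by case: eqP => [<-|_]; rewrite ?(negbTE k_s) /=; lia.
Qed.

Section MultisetPermutations.
Variable n : nat.
Implicit Types w : seq nat.

Lemma multiset_perm_mem w x : multiset_perm n w -> x \in w -> 0 < x <= n.
Proof.
case/andP=> /eqP size_w /allP twice; rewrite -mem_iota; apply/allP; move: x.
rewrite all_count count_mem_uniq_sum ?iota_uniq // size_w.
rewrite (eq_big_seq (fun=> 2)) => [|k /twice /eqP //].
by rewrite big_const_seq count_predT size_iota iter_addn_0 mulnC.
Qed.

Lemma multiset_perm_count w : multiset_perm n w -> {in w, forall x, count_mem x w = 2}.
Proof.
move=> mp x x_w; case/andP: mp (multiset_perm_mem mp x_w) => _ /allP twice x_n.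
by apply/eqP/twice; rewrite mem_iota add1n.
Qed.

Lemma perm_multiset_perm w w' : perm_eq w w' -> multiset_perm n w = multiset_perm n w'.
Proof.
move=> perm_ww'; rewrite /multiset_perm (perm_size perm_ww').
by congr (_ && _); apply: eq_all => k; rewrite (permP perm_ww').
Qed.

Lemma quasi_stirlingP w : quasi_stirling n w <-> multiset_perm n w /\ noncrossing w.
Proof.
split=> [/andP[mp /no_1212P avoid] | [mp nc]].
  by split=> //; apply: avoids1212_noncrossing (multiset_perm_count mp) avoid.
by rewrite /quasi_stirling mp; apply/no_1212P/noncrossing_avoids1212.
Qed.

Lemma quasi_stirling_rev w : quasi_stirling n w -> quasi_stirling n (rev w).
Proof.
case/andP=> mp /no_1212P avoid; have perm_w : perm_eq (rev w) w by rewrite perm_rev.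
by rewrite /quasi_stirling (perm_multiset_perm perm_w) mp; apply/no_1212P/avoids1212_rev.
Qed.

Lemma quasi_stirling_mirror w : quasi_stirling n w -> quasi_stirling n (mirror w).
Proof.
case/quasi_stirlingP=> mp nc; apply/quasi_stirlingP; split; last exact: noncrossing_mirror.
by rewrite (perm_multiset_perm (perm_mirror nc)).
Qed.

Lemma quasi_stirling_stutter : quasi_stirling n (flatten [seq [:: k; k] | k <- iota 1 n]).
Proof.
set stutter := fun s : seq nat => flatten [seq [:: k; k] | k <- s].
have size_stutter s : size (stutter s) = 2 * size s by elim: s => //= k s ->; lia.
have count_stutter s x : count_mem x (stutter s) = 2 * count_mem x s.
  by elim: s => //= k s ->; lia.
have mem_stutter s x : (x \in stutter s) = (x \in s).
  by rewrite -!has_pred1 !has_count count_stutter; lia.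
apply/quasi_stirlingP; split.
  rewrite /multiset_perm size_stutter size_iota eqxx /=.
  by apply/allP=> k k_n; rewrite count_stutter count_uniq_mem ?iota_uniq ?k_n.
elim: (iota 1 n) (iota_uniq 1 n) => [_|k s IH /andP[k_s /IH nc_s]]; first exact: noncrossing_nil.
apply: (@noncrossing_arch _ k [::] (stutter s)) => //; first by rewrite mem_stutter.
exact: noncrossing_nil.
Qed.

End MultisetPermutations.

Lemma big_involution (R : Type) (idx : R) (op : Monoid.com_law idx) (I : finType)
    (A : {set I}) (h : I -> I) (F : I -> R) :
  {in A, forall i, h i \in A} -> {in A, involutive h} ->
  \big[op/idx]_(i in A) F (h i) = \big[op/idx]_(i in A) F i.
Proof.
move=> hA hK; rewrite -big_imset; last exact: can_in_inj hK.
apply: eq_bigl => i; apply/imsetP/idP => [[j jA ->] | iA]; first exact: hA.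
by exists (h i); rewrite ?hK ?hA.
Qed.

Section QuasiStirlingTuples.
Variable n : nat.
Implicit Types (w : seq nat) (t : (2 * n).-tuple 'I_n.+1).

(* Inverse of [qs_word] on quasi-Stirling words; junk default on words of the wrong size. *)
Definition qs_tuple w : (2 * n).-tuple 'I_n.+1 :=
  insubd [tuple of nseq (2 * n) ord0] (map inord w).

Lemma qs_tupleK w : quasi_stirling n w -> qs_word (qs_tuple w) = w.
Proof.
case/andP=> mp _; have /andP[/eqP size_w _] := mp.
rewrite /qs_word val_insubd size_map size_w eqxx -map_comp -[RHS]map_id.
apply/eq_in_map => x /= /(multiset_perm_mem mp) x_n.
by rewrite inordK // ltnS; case/andP: x_n.
Qed.

Lemma mem_QS t : (t \in QS n) = quasi_stirling n (qs_word t).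
Proof. by rewrite inE. Qed.

Lemma qs_word_inj : injective (@qs_word n).
Proof. by move=> t t' /(inj_map val_inj) /val_inj. Qed.

Lemma QS_gt0 : 0 < #|QS n|.
Proof.
apply/card_gt0P; exists (qs_tuple (flatten [seq [:: k; k] | k <- iota 1 n])).
by rewrite mem_QS qs_tupleK quasi_stirling_stutter.
Qed.

Lemma sum_QS_involution (phi : seq nat -> seq nat) (F : seq nat -> nat) :
  (forall w, quasi_stirling n w -> quasi_stirling n (phi w)) ->
  (forall w, quasi_stirling n w -> phi (phi w) = w) ->
  \sum_(t in QS n) F (phi (qs_word t)) = \sum_(t in QS n) F (qs_word t).
Proof.
move=> phi_qs phiK; pose h (t : (2 * n).-tuple 'I_n.+1) := qs_tuple (phi (qs_word t)).
have h_word t : t \in QS n -> qs_word (h t) = phi (qs_word t).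
  by rewrite mem_QS => /phi_qs; apply: qs_tupleK.
transitivity (\sum_(t in QS n) F (qs_word (h t))).
  by apply: eq_bigr => t tQ; rewrite h_word.
have h_QS t : t \in QS n -> h t \in QS n.
  by move=> tQ; rewrite mem_QS h_word // phi_qs // -mem_QS.
apply: big_involution => // t tQ; apply: qs_word_inj.
by rewrite !h_word ?h_QS // phiK // -mem_QS.
Qed.

Lemma size_qs_word t : size (qs_word t) = 2 * n.
Proof. by rewrite size_map size_tuple. Qed.

Lemma sum_des_asc : \sum_(t in QS n) des (qs_word t) = \sum_(t in QS n) asc (qs_word t).
Proof.
rewrite -(sum_QS_involution des (@quasi_stirling_rev n) (fun w _ => revK w)).
by apply: eq_bigr => t _; rewrite des_rev.
Qed.

Lemma sum_plat : 0 < n -> 2 * \sum_(t in QS n) plat (qs_word t) = #|QS n| * (n + 1).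
Proof.
move=> n_gt0; rewrite mul2n -addnn -{1}(sum_QS_involution plat (@quasi_stirling_mirror n)).
  rewrite -big_split -sum_nat_const; apply: eq_bigr => t /[!mem_QS] /quasi_stirlingP[_ nc].
  have := count_adjacent_eq_mirror nc; rewrite !plat_count_adjacent size_qs_word.
  by rewrite -size_eq0 size_qs_word muln_eq0 (gtn_eqF n_gt0) /=; lia.
by move=> w /quasi_stirlingP[_ /mirrorK].
Qed.

Lemma sum_asc_des_plat : 0 < n ->
  \sum_(t in QS n) asc (qs_word t) + \sum_(t in QS n) des (qs_word t) +
  \sum_(t in QS n) plat (qs_word t) = #|QS n| * (2 * n).+1.
Proof.
move=> n_gt0; rewrite -!big_split -sum_nat_const; apply: eq_bigr => t _.
by rewrite /= asc_des_plat ?size_qs_word // -size_eq0 size_qs_word; lia.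
Qed.

End QuasiStirlingTuples.

Lemma natr_div_eq (R : numFieldType) a b c d :
  0 < b -> 0 < d -> a * d = c * b -> (a%:R / b%:R = c%:R / d%:R :> R)%R.
Proof.
move=> b_gt0 d_gt0 e; apply/eqP.
by rewrite GRing.eqr_div ?Num.Theory.pnatr_eq0 -?lt0n // -!GRing.natrM e.
Qed.

Theorem corollary3p1 (n : nat) (hn : (1 <= n)%N) :
  [/\ mean_stat asc n = ((3 * n + 1)%:R / 4%:R)%R,
      mean_stat des n = ((3 * n + 1)%:R / 4%:R)%R
    & mean_stat plat n = ((n + 1)%:R / 2%:R)%R].
Proof.
have card_gt0 := QS_gt0 n.
have total := sum_asc_des_plat hn.
have plateaux := sum_plat hn.
rewrite /mean_stat sum_des_asc; rewrite sum_des_asc in total.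
by split; apply: natr_div_eq => //; nia.
Qed.
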